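(* Let $G$ be a graph and $k \ge \gamma(G)$ an integer. If $D_{k+1}(G)$ is connected, then $X_k(G)$ is connected.
   Context: All graphs are finite and simple. A set $S \subseteq V(G)$ is a dominating set of $G$ if every vertex of $V(G)\setminus S$ is adjacent to a vertex of $S$. $\gamma(G)$ is the minimum cardinality of a dominating set of $G$. For an integer $k \ge \gamma(G)$, the $k$-dominating graph $D_k(G)$ is the graph whose vertices are the dominating sets of $G$ of cardinality at most $k$, with two such sets $A,B$ adjacent if and only if their symmetric difference $(A\setminus B)\cup(B\setminus A)$ consists of exactly one vertex of $G$. $X_k(G)$ is the graph whose vertices are the dominating sets of $G$ of cardinality exactly $k$, with two such sets $S,T$ adjacent if and only if there exist $s \in S$ and $t \in T$ with $T = (S\setminus\{s\})\cup\{t\}$ (and $S \neq T$). *)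

(* A finite simple graph is a symmetric irreflexive relation
   e : rel T on a finite vertex type T. *)
From mathcomp Require Import all_boot.
Set Implicit Arguments. Unset Strict Implicit. Unset Printing Implicit Defensive.

Section Dom.
Variable T : finType.
Variable e : rel T.

Definition dominating (S : {set T}) : bool :=
  [forall v, (v \notin S) ==> [exists u in S, e u v]].

(* gamma(G): the minimum cardinality of a dominating set
   ([set: T] is always dominating, so the arg min is well defined). *)
Definition domination_number : nat :=
  #|[arg min_(S < [set: T] | dominating S) #|S|]|.

Definition Dk_vertex (k : nat) (A : {set T}) : bool :=
  dominating A && (#|A| <= k).

Definition Dk_adj (k : nat) (A B : {set T}) : bool :=
  [&& Dk_vertex k A, Dk_vertex k B & #|(A :\: B) :|: (B :\: A)| == 1].

Definition Xk_vertex (k : nat) (A : {set T}) : bool :=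
  dominating A && (#|A| == k).

Definition Xk_adj (k : nat) (S S' : {set T}) : bool :=
  [&& Xk_vertex k S, Xk_vertex k S', S != S' &
      [exists s in S, exists t in S', S' == (S :\ s) :|: [set t]]].

Definition graph_connected (U : finType) (vert : pred U) (adj : rel U) : Prop :=
  forall A B, vert A -> vert B -> connect adj A B.

End Dom.

From mathcomp Require Import all_boot.
Set Implicit Arguments. Unset Strict Implicit. Unset Printing Implicit Defensive.

(* Fix a vertex S of X_k(G).  Call a set A "linked to S" when
   every vertex B of X_k(G) comparable with A (A ⊆ B or B ⊆ A) is reachable
   from S in X_k(G).  S itself is linked to S, since the only k-set comparable
   with S is S.  We show that linkedness propagates along every edge A -- A'
   of D_{k+1}(G): such an edge either removes or adds one vertex x, and in
   each case a k-dominating set B comparable with A' is either comparable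
   with A, or is one swap (B' = B - s + t) away from a k-dominating set
   comparable with A.  Following a path of D_{k+1}(G) from S to any other
   vertex S' of X_k(G) (vertices of X_k are vertices of D_{k+1}), S' is linked
   to S and comparable with itself, hence reachable from S. *)

Section Reconfiguration.
Variable T : finType.
Variable e : rel T.

Lemma dominating_superset (A C : {set T}) :
  dominating e A -> A \subset C -> dominating e C.
Proof.
move=> /forallP domA sAC; apply/forallP => v; apply/implyP => vC.
have vA : v \notin A by apply: contra vC; apply: (subsetP sAC).
have /existsP [u /andP [uA euv]] := implyP (domA v) vA.
by apply/existsP; exists u; rewrite (subsetP sAC).
Qed.

Lemma card_swap (B : {set T}) s t :
  s \in B -> t \notin B -> #|(B :\ s) :|: [set t]| = #|B|.
Proof.
move=> sB tB; rewrite setUC cardsU1 !inE (negbTE tB) andbF.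
by rewrite (cardsD1 s B) sB.
Qed.

Lemma Dk_adj_cases (n : nat) (A A' : {set T}) :
  Dk_adj e n A A' ->
  exists2 x, (x \in A) && (A' == A :\ x) || (x \notin A) && (A' == x |: A)
           & Dk_vertex e n A /\ Dk_vertex e n A'.
Proof.
case/and3P=> DA DA' /cards1P [x defx]; exists x; last by [].
have inx v : (v \in A) (+) (v \in A') = (v == x).
  have : v \in [set x] = (v == x) by rewrite inE.
  by rewrite -defx !inE; case: (v \in A); case: (v \in A').
have sameA v : v != x -> (v \in A') = (v \in A).
  by move=> /negbTE vx; have := inx v; rewrite vx; case: (v \in A); case: (v \in A').
have := inx x; rewrite eqxx; case xA: (x \in A) => /= xA'; rewrite ?orbF.
- apply/eqP/setP => v; rewrite !inE; case: (eqVneq v x) => [->|/sameA //].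
  by rewrite (negbTE xA').
- apply/eqP/setP => v; rewrite !inE; case: (eqVneq v x) => [->|/sameA //].
  by rewrite xA' xA.
Qed.

Variable k : nat.

Lemma Xk_adj_swap (B : {set T}) s t :
  Xk_vertex e k B -> Xk_vertex e k ((B :\ s) :|: [set t]) ->
  s \in B -> t \notin B -> Xk_adj e k B ((B :\ s) :|: [set t]).
Proof.
move=> XB XC sB tB; rewrite /Xk_adj XB XC /=; apply/andP; split.
  apply: contraNneq tB => ->; by rewrite !inE eqxx orbT.
apply/existsP; exists s; rewrite sB /=.
by apply/existsP; exists t; rewrite !inE eqxx orbT /=.
Qed.

(* Adjacency in X_k(G) is symmetric: if S' = S - s + t with S' <> S and both
   of size k, then t lies outside S and S = S' - t + s. *)
Lemma Xk_adj_sym : symmetric (Xk_adj e k).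
Proof.
apply: symmetric_from_pre => S S'.
case/and4P=> XS XS' neqSS' /existsP [s /andP [sS /existsP [t /andP [tS' /eqP defS']]]].
have [_ /eqP cS] := andP XS; have [_ /eqP cS'] := andP XS'.
have tS : t \notin S.
  apply: contra neqSS' => tS; rewrite eq_sym eqEcard cS cS' leqnn andbT.
  by rewrite defS' subUset sub1set tS subD1set.
have st : s != t by apply: contraNneq tS => <-.
have defS : S = (S' :\ t) :|: [set s].
  apply/setP => v; rewrite defS' !inE.
  case: (eqVneq v s) => [->|vs]; first by rewrite sS orbT.
  by case: (eqVneq v t) => [->|_]; rewrite ?(negbTE tS) ?orbF.
rewrite /Xk_adj XS XS' eq_sym neqSS' /=.
apply/existsP; exists t; rewrite tS' /=.
by apply/existsP; exists s; rewrite sS -defS eqxx.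
Qed.

Variable S : {set T}.

Definition comparable (A B : {set T}) : bool := (A \subset B) || (B \subset A).

Definition linked (A : {set T}) : Prop :=
  forall B, Xk_vertex e k B -> comparable A B -> connect (Xk_adj e k) S B.

(* Removing a vertex x from a dominating set preserves linkedness: a k-set
   B above A - x but incomparable with A is one swap away from the k-set
   B - z + x above A, where z is a vertex of B outside A. *)
Lemma linked_remove (A : {set T}) x :
  dominating e A -> x \in A -> linked A -> linked (A :\ x).
Proof.
move=> domA xA linkA B XB /orP [sAB|sBA]; last first.
  by apply: linkA => //; rewrite /comparable (subset_trans sBA (subD1set _ _)) orbT.
case sBA: (B \subset A); first by apply: linkA => //; rewrite /comparable sBA orbT.
case xB: (x \in B).
  apply: linkA => //; apply/orP; left; apply/subsetP => v vA.
  case: (eqVneq v x) => [->//|vx]; apply: (subsetP sAB); by rewrite !inE vx.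
have /subsetPn [z zB zA] : ~~ (B \subset A) by rewrite sBA.
set C := (B :\ z) :|: [set x].
have sAC : A \subset C.
  apply/subsetP => v vA; rewrite !inE; case: (eqVneq v x) => [_|vx]; first by rewrite orbT.
  have vz : v != z by apply: contraNneq zA => <-.
  by rewrite vz (subsetP sAB) // !inE vx.
have XC : Xk_vertex e k C.
  have [_ cB] := andP XB.
  by rewrite /Xk_vertex (dominating_superset domA sAC) card_swap ?xB.
apply: connect_trans (linkA C XC _) _; first by rewrite /comparable sAC.
by apply: connect1; rewrite Xk_adj_sym Xk_adj_swap ?xB.
Qed.

(* Adding a vertex x to a set A with |A + x| <= k + 1 preserves linkedness:
   a k-set B below A + x but incomparable with A must be A - z + x for some
   z in A, and then A itself is a vertex of X_k(G) adjacent to B. *)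
Lemma linked_add (A : {set T}) x :
  dominating e A -> x \notin A -> #|x |: A| <= k.+1 -> linked A -> linked (x |: A).
Proof.
move=> domA xA cA' linkA B XB /orP [sAB|sBA].
  by apply: linkA => //; rewrite /comparable (subset_trans (subsetUr _ _) sAB).
case sBA': (B \subset A); first by apply: linkA => //; rewrite /comparable sBA' orbT.
case sAB: (A \subset B); first by apply: linkA => //; rewrite /comparable sAB.
have /subsetPn [z zA zB] : ~~ (A \subset B) by rewrite sAB.
have xB : x \in B.
  have /subsetPn [w wB wA] : ~~ (B \subset A) by rewrite sBA'.
  by have := subsetP sBA w wB; rewrite !inE (negbTE wA) orbF => /eqP <-.
have [_ /eqP cB] := andP XB.
have sBC : B \subset (A :\ z) :|: [set x].
  apply/subsetP => v vB; have := subsetP sBA v vB; rewrite !inE.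
  have -> : v != z by apply: contraNneq zB => <-.
  by case/orP=> ->; rewrite ?orbT.
have cAk : #|A| = k.
  have cxA : #|x |: A| = #|A|.+1 by rewrite cardsU1 xA.
  apply/eqP; rewrite eqn_leq -ltnS -cxA cA' -cB -(card_swap zA xA).
  exact: subset_leq_card.
have defB : B = (A :\ z) :|: [set x].
  by apply/eqP; rewrite eqEcard sBC card_swap // cAk cB leqnn.
have XA : Xk_vertex e k A by rewrite /Xk_vertex domA cAk eqxx.
apply: connect_trans (linkA A XA _) _; first by rewrite /comparable subxx.
by apply: connect1; rewrite defB Xk_adj_swap -?defB.
Qed.

Lemma linked_path (p : seq {set T}) (A : {set T}) :
  path (Dk_adj e k.+1) A p -> linked A -> linked (last A p).
Proof.
elim: p A => [|A' p IHp] A //= /andP [adjAA' pathA'] linkA; apply: IHp pathA' _.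
have [x /orP [] /andP [xA /eqP ->] [/andP [domA _] /andP [_ cA']]] :=
  Dk_adj_cases adjAA'.
- exact: linked_remove.
- exact: linked_add.
Qed.

End Reconfiguration.

Theorem theorem12 (T : finType) (e : rel T)
  (e_sym : symmetric e) (e_irr : irreflexive e) (k : nat) :
  domination_number e <= k ->
  graph_connected (Dk_vertex e k.+1) (Dk_adj e k.+1) ->
  graph_connected (Xk_vertex e k) (Xk_adj e k).
Proof.
move=> _ connD S S' XS XS'.
have Xk_Dk A : Xk_vertex e k A -> Dk_vertex e k.+1 A.
  by case/andP=> domA /eqP cA; rewrite /Dk_vertex domA cA leqnSn.
have [p pathSS' defS'] := connectP (connD S S' (Xk_Dk _ XS) (Xk_Dk _ XS')).
have linkS : linked e k S S.
  move=> B XB cmpSB; have [_ /eqP cS] := andP XS; have [_ /eqP cB] := andP XB.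
  suff -> : B = S by apply: connect0.
  case/orP: cmpSB => sub; [apply/esym/eqP | apply/eqP];
    by rewrite eqEcard sub cS cB leqnn.
rewrite defS'; apply: (linked_path pathSS' linkS); first by rewrite -defS'.
by rewrite /comparable subxx.
Qed.
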